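(* Let $q$ be a prime power, $n=2^v$ with $v\ge1$ and $q$ odd. Let $s,t$ be integers with $s$ odd, $qt\equiv t\pmod{2^v}$ and $t\not\equiv0\pmod{2^v}$. Type-I duadic splittings of $\mathbb{Z}_{2^v}$ given by $\rho_{s,t}$ exist if and only if $\nu_2(q^j-s)>\nu_2(t)$ for all integers $j\ge0$.
   Context: $\mu_q:\mathbb{Z}_n\to\mathbb{Z}_n$, $i\mapsto qi\bmod n$; $P\subseteq\mathbb{Z}_n$ is $\mu_q$-invariant if $\mu_q(P)=P$. $\rho_{s,t}:\mathbb{Z}_n\to\mathbb{Z}_n$, $i\mapsto s(i+t)\bmod n$. Type-I duadic splittings of $\mathbb{Z}_n$ given by $\rho_{s,t}$ exist if there is a $\mu_q$-invariant $P$ with $\mathbb{Z}_n=P\cup\rho_{s,t}(P)$ a disjoint union. $\nu_2$ is the $2$-adic valuation, $\nu_2(0)=\infty$. *)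

From mathcomp Require Import all_boot all_order all_algebra.
Set Implicit Arguments. Unset Strict Implicit. Unset Printing Implicit Defensive.
Import Order.TTheory GRing.Theory Num.Theory.
Local Open Scope ring_scope.

(* Z_n is modelled by 'I_n = {0,...,n-1} (residues); maps int -> int are
   reduced mod n with the nonnegative remainder modz. *)

Definition zn_img (n : nat) (f : int -> int) (P : {set 'I_n}) : {set 'I_n} :=
  [set j : 'I_n | [exists i in P, (nat_of_ord j)%:Z == ((f (nat_of_ord i)%:Z) %% n%:Z)%Z]].

Definition mu (n : nat) (q : int) (i : int) : int := q * i.
Definition rho (n : nat) (s t : int) (i : int) : int := s * (i + t).

Definition mu_invariant (n : nat) (q : int) (P : {set 'I_n}) : Prop :=
  zn_img (mu n q) P = P.

Definition typeI_duadic_exists (n : nat) (q s t : int) : Prop :=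
  exists P : {set 'I_n}, mu_invariant q P /\
    P :&: zn_img (rho n s t) P = set0 /\ P :|: zn_img (rho n s t) P = setT.

(* 2-adic valuation, None = infinity (nu2 0 = oo) *)
Definition nu2 (x : int) : option nat :=
  if x == 0 then None else Some (logn 2 `|x|%N).

Definition ext_gt (a b : option nat) : bool :=
  match a, b with
  | None, Some _ => true
  | Some x, Some y => (y < x)%N
  | _, _ => false
  end.

Definition prime_power (q : nat) : Prop :=
  exists p k : nat, prime p /\ (0 < k)%N /\ q = (p ^ k)%N.

From mathcomp Require Import all_boot all_order all_algebra zify ring.
Import Order.TTheory GRing.Theory Num.Theory.
Local Open Scope ring_scope.

(* A splitting P with mu_q(P) = P and rho(P) = Z_n \ P admits no coincidence
   rho(i) = mu_q^j(i): such an i would put rho(i) either in both P and rho(P)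
   or in neither.  Let 2^w be the exact power of 2 dividing t.  If
   2^(w+1) does not divide q^j - s, then gcd(q^j - s, 2^v) divides 2^w, hence
   s t, so (q^j - s) i = s t (mod 2^v) has a solution, which is a coincidence.
   Conversely, if 2^(w+1) divides every q^j - s, then q = s = 1 and t = 2^w
   modulo 2^(w+1); thus mu_q preserves bit w of i while rho flips it, and the
   residues with bit w clear form a splitting. *)


Section Splittings.
Context {T : finType}.

Lemma imset_inj_pred (h : T -> T) (a b : pred T) :
  injective h -> (forall x, b (h x) = a x) -> h @: [set x | a x] = [set x | b x].
Proof.
move=> h_inj hab; apply/setP => y; have /codomP[x ->] := injF_onto h_inj y.
by rewrite mem_imset // !inE hab.
Qed.

Lemma splitting_neq {f g : T -> T} {P : {set T}} :
  injective f -> {mono g : x / x \in P} ->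
  P :&: f @: P = set0 -> P :|: f @: P = setT -> forall x, f x != g x.
Proof.
move=> f_inj gP PfP0 PfPT x; apply/eqP => fg.
have fPx : (f x \in f @: P) = (x \in P) by rewrite mem_imset.
case xP: (x \in P).
  by have := in_set0 (f x); rewrite -PfP0 inE fPx {1}fg gP xP.
by have := in_setT (f x); rewrite -PfPT inE fPx {1}fg gP xP.
Qed.

End Splittings.

Lemma eqz_mod_mul2l (m c x y : int) :
  coprimez c m -> (c * x == c * y %[mod m])%Z = (x == y %[mod m])%Z.
Proof. by move=> cm; rewrite !eqz_mod_dvd -mulrBr Gauss_dvdzr // coprimez_sym. Qed.

Section ResidueMaps.
Context {n : nat} (n_gt0 : (0 < n)%N).

Lemma inZn_subproof (x : int) : (`|(x %% n)%Z| < n)%N. Proof. lia. Qed.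
Definition inZn (x : int) : 'I_n := Ordinal (inZn_subproof x).

Lemma inZnE x : (inZn x : int) = (x %% n)%Z.
Proof. rewrite /=; lia. Qed.

Lemma eq_inZn x y : (inZn x == inZn y) = (x == y %[mod n])%Z.
Proof. by rewrite -val_eqE /= -eqz_nat !inZnE. Qed.

Lemma inZn_ord (i : 'I_n) : inZn i = i.
Proof. by apply: val_inj; rewrite /= modz_small //; have := ltn_ord i; lia. Qed.

Definition zn_map (f : int -> int) (i : 'I_n) : 'I_n := inZn (f i).

Lemma zn_imgE f P : zn_img f P = zn_map f @: P.
Proof.
apply/setP => j; rewrite inE; apply/existsP/imsetP => [[i /andP[iP /eqP fij]]|[i iP ->]].
  by exists i => //; apply/eqP; rewrite -(inZn_ord j) eq_inZn fij modz_mod.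
by exists i; rewrite iP /= inZnE.
Qed.

Lemma zn_map_inj f :
  (forall x y, f x == f y %[mod n] -> x == y %[mod n])%Z -> injective (zn_map f).
Proof.
move=> f_inj i j /eqP; rewrite eq_inZn => /f_inj.
by rewrite -eq_inZn !inZn_ord => /eqP.
Qed.

Lemma zn_map_mu_inj q : coprimez q n -> injective (zn_map (mu n q)).
Proof. by move=> qn; apply: zn_map_inj => x y; rewrite /mu eqz_mod_mul2l. Qed.

Lemma zn_map_rho_inj s t : coprimez s n -> injective (zn_map (rho n s t)).
Proof. by move=> sn; apply: zn_map_inj => x y; rewrite /rho eqz_mod_mul2l // eqz_modDr. Qed.

Lemma iter_zn_map_mu q j i : iter j (zn_map (mu n q)) i = inZn (q ^+ j * i).
Proof.
elim: j => [|j IHj] /=; first by rewrite mul1r inZn_ord.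
by apply/eqP; rewrite IHj eq_inZn /mu inZnE modzMmr exprS mulrA.
Qed.

End ResidueMaps.

Lemma typeI_duadic_no_coincidence {n : nat} {q s t : int} :
  (0 < n)%N -> coprimez q n -> coprimez s n -> typeI_duadic_exists n q s t ->
  forall (j : nat) (x : int), ~~ (s * (x + t) == q ^+ j * x %[mod n])%Z.
Proof.
move=> n_gt0 qn sn [P [muP [PrP0 PrPT]]] j x.
rewrite /mu_invariant !(zn_imgE n_gt0) in muP PrP0 PrPT.
have mu_mono : {mono zn_map n_gt0 (mu n q) : i / i \in P}.
  by move=> i; rewrite -{1}muP mem_imset //; apply: zn_map_mu_inj.
have iter_mono : {mono iter j (zn_map n_gt0 (mu n q)) : i / i \in P}.
  by elim: j => [|j IHj] i //=; rewrite mu_mono IHj.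
have := splitting_neq (zn_map_rho_inj n_gt0 s t sn) iter_mono PrP0 PrPT (inZn n_gt0 x).
rewrite iter_zn_map_mu /zn_map /rho eq_inZn inZnE.
by rewrite -modzMmr modzDml !modzMmr.
Qed.

Definition low_half (K x : int) : bool := ((x %% (2 * K))%Z < K).

Lemma low_half_mod (K x y : int) :
  (x == y %[mod 2 * K])%Z -> low_half K x = low_half K y.
Proof. by rewrite /low_half => /eqP ->. Qed.

Lemma low_halfDK (K x : int) : 0 < K -> low_half K (x + K) = ~~ low_half K x.
Proof.
move=> K_gt0; have M_gt0 : 0 < 2 * K by lia.
have := modz_ge0 x (lt0r_neq0 M_gt0); have := ltz_pmod x M_gt0.
rewrite /low_half -modzDml; move: (x %% (2 * K))%Z => r r_lt r_ge0.
have [r_ltK | r_geK] := ltrP r K; first by rewrite modz_small; lia.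
have -> : r + K = (r - K) + 2 * K by ring.
by rewrite modzDr modz_small; lia.
Qed.

Lemma typeI_duadic_low_half {n : nat} {q s t : int} (K : int) :
  (0 < n)%N -> 0 < K -> coprimez q n -> coprimez s n ->
  (2 * K %| n%:Z)%Z -> (2 * K %| q - 1)%Z -> (2 * K %| s - 1)%Z ->
  (t == K %[mod 2 * K])%Z -> typeI_duadic_exists n q s t.
Proof.
move=> n_gt0 K_gt0 qn sn Mn Mq Ms tK.
have low_inZn x : low_half K (inZn n_gt0 x) = low_half K x.
  apply: low_half_mod; rewrite inZnE eqz_mod_dvd.
  by apply: dvdz_trans Mn _; rewrite -eqz_mod_dvd modz_mod.
have low_mu x : low_half K (mu n q x) = low_half K x.
  apply: low_half_mod; rewrite eqz_mod_dvd /mu -[X in _ - X]mul1r -mulrBl.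
  exact: dvdz_mulr.
have low_rho x : low_half K (rho n s t x) = ~~ low_half K x.
  rewrite -low_halfDK //; apply: low_half_mod; rewrite /rho eqz_mod_dvd.
  have -> : s * (x + t) - (x + K) = (s - 1) * (x + t) + (t - K) by ring.
  by rewrite rpredD ?dvdz_mulr // -eqz_mod_dvd.
pose lowP := [pred i : 'I_n | low_half K i].
exists [set i | lowP i]; rewrite /mu_invariant !(zn_imgE n_gt0).
have rhoP : zn_map n_gt0 (rho n s t) @: [set i | lowP i] = [set i | ~~ lowP i].
  apply: imset_inj_pred; first exact: zn_map_rho_inj.
  by move=> i; rewrite /= low_inZn low_rho negbK.
split.
  apply: imset_inj_pred; first exact: zn_map_mu_inj.
  by move=> i; rewrite /= low_inZn low_mu.
by rewrite rhoP; split; apply/setP => i; rewrite !inE ?andbN ?orbN.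
Qed.

Lemma eqz_mod_half (K t : int) :
  (K %| t)%Z -> ~~ (2 * K %| t)%Z -> (t == K %[mod 2 * K])%Z.
Proof.
case/dvdzP=> a ->{t} ndvd; have a_odd : ~~ (2 %| a)%Z.
  by apply: contra ndvd => /dvdzP[b ->]; apply/dvdzP; exists b; ring.
rewrite eqz_mod_dvd -[X in _ - X]mul1r -mulrBl dvdz_mul //; lia.
Qed.

Lemma congr_solvable {d c m : int} :
  (gcdz d m %| c)%Z -> exists x, (d * x == c %[mod m])%Z.
Proof.
case/dvdzP=> c' ->; have [u [u' uu']] := Bezoutz d m.
exists (u * c'); rewrite eqz_mod_dvd -uu'.
have -> : d * (u * c') - c' * (u * d + u' * m) = - (c' * u') * m by ring.
exact: dvdz_mull.
Qed.

Lemma ext_gt_nu2 (x : int) (w : nat) :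
  ext_gt (nu2 x) (Some w) = ((2 ^ w.+1)%N%:Z %| x)%Z.
Proof.
rewrite /nu2; case: eqP => [->|/eqP x_neq0] /=; first by rewrite dvdz0.
by rewrite dvdzE /= pfactor_dvdn // absz_gt0.
Qed.

Lemma dvdz_pow2_logn (t : int) : ((2 ^ logn 2 `|t|)%N%:Z %| t)%Z.
Proof. by rewrite dvdzE /= pfactor_dvdnn. Qed.

Lemma gcdz_pow2_dvd {d : int} (v : nat) {w : nat} :
  ~~ ((2 ^ w.+1)%N%:Z %| d)%Z -> (gcdz d (2 ^ v)%N %| (2 ^ w)%N%:Z)%Z.
Proof.
move=> d_ndvd; rewrite dvdzE /=.
case/dvdn_pfactor: (dvdn_gcdr `|d| (2 ^ v)) => // k _ gE.
rewrite gE dvdn_exp2l // leqNgt; apply: contra d_ndvd => w_lt_k.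
by rewrite dvdzE /=; apply: dvdn_trans (dvdn_gcdl `|d| (2 ^ v)); rewrite gE dvdn_exp2l.
Qed.

Lemma coprimez_pow2 (c : int) (v : nat) : ~~ (2 %| c)%Z -> coprimez c (2 ^ v)%N.
Proof.
rewrite dvdzE /= dvdn2 negbK => c_odd.
by rewrite coprimezE /= coprime_sym coprimeXl // coprime2n.
Qed.

Lemma typeI_duadic_dvd_pow_sub (v w : nat) (q s t : int) :
  coprimez q (2 ^ v)%N -> coprimez s (2 ^ v)%N -> ((2 ^ w)%N%:Z %| t)%Z ->
  typeI_duadic_exists (2 ^ v) q s t -> forall j, ((2 ^ w.+1)%N%:Z %| q ^+ j - s)%Z.
Proof.
move=> qn sn wt split_ex j; apply: contraT => d_ndvd.
have [x dx] := congr_solvable (dvdz_trans (gcdz_pow2_dvd v d_ndvd) (dvdz_mull s wt)).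
have n_gt0 : (0 < 2 ^ v)%N by rewrite expn_gt0.
case/negP: (typeI_duadic_no_coincidence n_gt0 qn sn split_ex j x).
rewrite eqz_mod_dvd in dx; rewrite eqz_mod_dvd.
have -> : s * (x + t) - q ^+ j * x = - ((q ^+ j - s) * x - s * t) by ring.
by rewrite rpredN.
Qed.

Lemma typeI_duadic_of_dvd_pow_sub (v w : nat) (q s t : int) :
  (w < v)%N -> ((2 ^ w)%N%:Z %| t)%Z -> ~~ ((2 ^ w.+1)%N%:Z %| t)%Z ->
  (forall j, ((2 ^ w.+1)%N%:Z %| q ^+ j - s)%Z) -> typeI_duadic_exists (2 ^ v) q s t.
Proof.
move=> w_lt_v wt t_ndvd dvd_qs; pose K := (2 ^ w)%N%:Z.
have M_eq : (2 ^ w.+1)%N%:Z = 2 * K by rewrite expnS PoszM.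
rewrite M_eq in t_ndvd dvd_qs.
have Ms : (2 * K %| s - 1)%Z by rewrite -opprB rpredN -(expr0 q) dvd_qs.
have Mq : (2 * K %| q - 1)%Z.
  have -> : q - 1 = (q ^+ 1 - s) - (1 - s) by rewrite expr1; ring.
  by rewrite rpredB // -(expr0 q).
have coprime_of c : (2 * K %| c - 1)%Z -> coprimez c (2 ^ v)%N.
  move=> /(dvdz_trans (dvdz_mulr K (dvdzz 2))) c_odd; apply: coprimez_pow2; lia.
apply: (typeI_duadic_low_half K) => //; rewrite ?expn_gt0 ?coprime_of //.
- by rewrite ltz_nat expn_gt0.
- by rewrite -M_eq dvdzE /= dvdn_exp2l.
- exact: eqz_mod_half wt t_ndvd.
Qed.

Theorem lemma3p4 (q v : nat) (s t : int) :
  prime_power q -> odd q -> (1 <= v)%N ->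
  ~~ (2 %| s)%Z ->
  (q%:Z * t = t %[mod (2 ^ v)%N%:Z])%Z ->
  (t != 0 %[mod (2 ^ v)%N%:Z])%Z ->
  (typeI_duadic_exists (2 ^ v) q%:Z s t <->
   (forall j : nat, ext_gt (nu2 (q%:Z ^+ j - s)) (nu2 t))).
Proof.
move=> _ q_odd _ s_odd _ t_nmod.
have t_neq0 : t != 0 by apply: contraNneq t_nmod => ->.
set w := logn 2 `|t|.
have nu2t : nu2 t = Some w by rewrite /nu2 (negbTE t_neq0).
have t_ndvd : ~~ ((2 ^ w.+1)%N%:Z %| t)%Z by rewrite -ext_gt_nu2 nu2t /= ltnn.
have w_lt_v : (w < v)%N.
  rewrite ltnNge; apply: contra t_nmod => v_le_w; rewrite eqz_mod_dvd subr0.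
  by apply: dvdz_trans (dvdz_pow2_logn t); rewrite dvdzE /= dvdn_exp2l.
have -> : (forall j, ext_gt (nu2 (q%:Z ^+ j - s)) (nu2 t)) <->
          (forall j, ((2 ^ w.+1)%N%:Z %| q%:Z ^+ j - s)%Z).
  by rewrite nu2t; split=> dvd_qs j; move: (dvd_qs j); rewrite ext_gt_nu2.
split; last exact: typeI_duadic_of_dvd_pow_sub (dvdz_pow2_logn t) t_ndvd.
apply: typeI_duadic_dvd_pow_sub (dvdz_pow2_logn t); apply: coprimez_pow2 => //.
by rewrite dvdzE /= dvdn2 q_odd.
Qed.
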